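(* Let $L^2_0(B)$ denote the vector space $B$ with inner product $\langle b,b'\rangle=\Phi_A(b^*b')$. Then $L^2_0(B)\in{}_B\mathrm{Rep}^A$, with $B$ acting by left multiplication and the right $A$-comodule structure $\alpha_B=\Delta_A|_B$.
   Context: $A$ is a CQG Hopf $*$-algebra: a complex Hopf algebra $(A,\Delta_A,\varepsilon_A,S_A)$ with an anti-linear involution making it a $*$-algebra with $\Delta_A$ a $*$-homomorphism, admitting a state $\Phi_A$ with $(\Phi_A\otimes\mathrm{id})\Delta_A(a)=\Phi_A(a)1=(\mathrm{id}\otimes\Phi_A)\Delta_A(a)$ (it is faithful). Put $a^\dagger=S_A(a)^*$. $B\subseteq A$ is a unital right coideal $*$-subalgebra, i.e. $\Delta_A(B)\subseteq B\odot A$. ${}_B\mathrm{Rep}^A$: left $B$-modules $V$ with right $A$-comodule structure $v\mapsto v_{(0)}\otimes v_{(1)}$ satisfying $(bv)_{(0)}\otimes(bv)_{(1)}=b_{(1)}v_{(0)}\otimes b_{(2)}v_{(1)}$, which are pre-Hilbert spaces with $\langle v,bw\rangle=\langle b^*v,w\rangle$ and $\langle v,w_{(0)}\rangle w_{(1)}=\langle v_{(0)},w\rangle v_{(1)}^\dagger$ for all $v,w\in V$, $b\in B$. *)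

From HB Require Import structures.
From mathcomp Require Import all_boot all_order all_algebra.
Set Implicit Arguments. Unset Strict Implicit. Unset Printing Implicit Defensive.
Import Order.TTheory GRing.Theory Num.Theory.
Local Open Scope ring_scope.

(* Scalars: C is a numeric closed field (with conjugation Num.conj and the   *)
(* positivity order); the complex numbers are the motivating instance.       *)
(* Algebraic tensor products V (.) W are encoded by finite lists of pairs     *)
(* (Sweedler-style representatives) sum_i v_i (x) w_i.  Two representatives  *)
(* denote the same tensor iff all linear functionals f (x) g agree on them;   *)
(* over a field this is exactly equality in V (x) W.                          *)

Section Tensor.
Variable C : numClosedFieldType.

Definition tensor (V W : Type) := seq (V * W).

Definition tev (V W : lmodType C) (f : {scalar V}) (g : {scalar W})
  (t : tensor V W) : C := \sum_(p <- t) f p.1 * g p.2.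

Definition teq (V W : lmodType C) (t t' : tensor V W) : Prop :=
  forall (f : {scalar V}) (g : {scalar W}), tev f g t = tev f g t'.

Definition tlin (V W : lmodType C) (t : tensor V W) (k : C) (t' : tensor V W)
  : tensor V W := t ++ [seq (k *: p.1, p.2) | p <- t'].

Definition tin_left (V W : Type) (P : {pred V}) (t : tensor V W) : bool :=
  all (fun p => p.1 \in P) t.
End Tensor.

Section Hopf.
Variable C : numClosedFieldType.
Variable A : algType C.
Variables (st : A -> A) (Delta : A -> tensor A A) (eps : A -> C)
          (S : A -> A) (Phi : A -> C).

Definition dagger (a : A) : A := st (S a).

Definition is_Hopf_algebra : Prop :=
  [/\
      [/\ (forall a b (k : C), teq (Delta (a + k *: b)) (tlin (Delta a) k (Delta b))),
          teq (Delta 1) [:: (1, 1)] &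
          (forall a b, teq (Delta (a * b))
                    [seq (p.1 * q.1, p.2 * q.2) | p <- Delta a, q <- Delta b])],
      (* coassociativity: (Delta (x) id) Delta = (id (x) Delta) Delta *)
      (forall a (f g h : {scalar A}),
          \sum_(p <- Delta a) tev f g (Delta p.1) * h p.2
        = \sum_(p <- Delta a) f p.1 * tev g h (Delta p.2)),
      [/\ (forall a b (k : C), eps (a + k *: b) = eps a + k * eps b),
          eps 1 = 1,
          (forall a b, eps (a * b) = eps a * eps b),
          (forall a, \sum_(p <- Delta a) eps p.1 *: p.2 = a) &
          (forall a, \sum_(p <- Delta a) eps p.2 *: p.1 = a)] &
      [/\ (forall a b (k : C), S (a + k *: b) = S a + k *: S b),
          (forall a, \sum_(p <- Delta a) S p.1 * p.2 = eps a *: 1) &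
          (forall a, \sum_(p <- Delta a) p.1 * S p.2 = eps a *: 1)]].

Definition is_star_structure : Prop :=
  [/\ (forall a, st (st a) = a),
      (forall a b (k : C), st (a + k *: b) = st a + (Num.conj k) *: st b),
      (forall a b, st (a * b) = st b * st a) &
      (forall a, teq (Delta (st a)) [seq (st p.1, st p.2) | p <- Delta a])].

Definition is_state : Prop :=
  [/\ (forall a b (k : C), Phi (a + k *: b) = Phi a + k * Phi b),
      Phi 1 = 1 &
      (forall a, 0 <= Phi (st a * a))].

Definition is_faithful : Prop := forall a, Phi (st a * a) = 0 -> a = 0.

Definition is_Haar : Prop :=
  (forall a, \sum_(p <- Delta a) Phi p.1 *: p.2 = Phi a *: 1) /\
  (forall a, \sum_(p <- Delta a) Phi p.2 *: p.1 = Phi a *: 1).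

Definition is_CQG_Hopf_star : Prop :=
  [/\ is_Hopf_algebra, is_star_structure, is_state, is_faithful & is_Haar].

Definition is_right_coideal_star_subalg (B : {pred A}) : Prop :=
  [/\ 1 \in B,
      (forall b c (k : C), b \in B -> c \in B -> b + k *: c \in B),
      (forall b c, b \in B -> c \in B -> b * c \in B),
      (forall b, b \in B -> st b \in B) &
      (forall b, b \in B -> exists t, teq (Delta b) t /\ tin_left B t)].

(* complex vector space W (any vector space is a subspace of itself).        *)
(*   coact v     : the right A-coaction v |-> v_(0) (x) v_(1) (a tensor      *)
(*                 representative, required to lie in V (.) A up to teq),    *)
(*   ip v w      : the inner product <v, w> (anti-linear in v).              *)
Definition in_BRep (B : {pred A}) (W : lmodType C) (V : {pred W})
  (act : A -> W -> W) (coact : W -> tensor W A) (ip : W -> W -> C) : Prop :=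
  let good t v := teq t (coact v) /\ tin_left V t in
  [/\
      0 \in V /\ (forall v w (k : C), v \in V -> w \in V -> v + k *: w \in V),
      [/\ (forall b v, b \in B -> v \in V -> act b v \in V),
          (forall b v w (k : C), b \in B -> v \in V -> w \in V ->
              act b (v + k *: w) = act b v + k *: act b w),
          (forall b c v (k : C), b \in B -> c \in B -> v \in V ->
              act (b + k *: c) v = act b v + k *: act c v),
          (forall v, v \in V -> act 1 v = v) &
          (forall b c v, b \in B -> c \in B -> v \in V ->
              act (b * c) v = act b (act c v))],
      [/\ (forall v, v \in V -> exists t, good t v),
          (forall v w (k : C), v \in V -> w \in V ->
              teq (coact (v + k *: w)) (tlin (coact v) k (coact w))),
          (forall v t (f : {scalar W}) (g h : {scalar A}), v \in V -> good t v ->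
                \sum_(p <- t) tev f g (coact p.1) * h p.2
              = \sum_(p <- t) f p.1 * tev g h (Delta p.2)) &
          (forall v t, v \in V -> good t v ->
              \sum_(p <- t) eps p.2 *: p.1 = v)],
      (forall b v tb tv, b \in B -> v \in V ->
          teq tb (Delta b) -> tin_left B tb -> good tv v ->
          teq (coact (act b v))
              [seq (act p.1 q.1, p.2 * q.2) | p <- tb, q <- tv]) &
   [/\
      [/\ (forall u v w (k : C), u \in V -> v \in V -> w \in V ->
              ip u (v + k *: w) = ip u v + k * ip u w),
          (forall v w, v \in V -> w \in V -> ip w v = Num.conj (ip v w)) &
          (forall v, v \in V -> v != 0 -> 0 < ip v v)],
      (forall b v w, b \in B -> v \in V -> w \in V ->
          ip v (act b w) = ip (act (st b) v) w) &
      (forall v w tv tw, v \in V -> w \in V -> good tv v -> good tw w ->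
          \sum_(p <- tw) ip v p.1 *: p.2
        = \sum_(p <- tv) ip p.1 w *: dagger p.2)]].

End Hopf.

From HB Require Import structures.
From mathcomp Require Import all_boot all_order all_algebra.
From mathcomp Require Import ring.
Import Order.TTheory GRing.Theory Num.Theory.
Local Open Scope ring_scope.

Set Implicit Arguments. Unset Strict Implicit.

(* Since the Haar state is faithful, the functionals [Phi (st x * _)] separate
   the points of A.  Hence a representative of a tensor, which [teq] pins down
   only through the values of the products [f (x) g], already determines the
   value of every bilinear form on it, and all Sweedler computations can be
   done on [Delta v] itself.  The only axiom with real content is
   <v, w_(0)> w_(1) = <v_(0), w> v_(1)^dagger.  Expanding Delta (w^* v_(1))
   inside the left invariance of Phi and then using coassociativity and
   v_(1) S(v_(2)) = eps(v) 1 gives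
   Phi (w^* v_(1)) S(v_(2)) = Phi (w_(1)^* v) w_(2)^*,
   and applying the involution to this identity yields the axiom. *)

Section ScalarLinear.
Variables (C : numClosedFieldType) (V : lmodType C).

Definition scalar_linear (f : V -> C) :=
  forall a b (k : C), f (a + k *: b) = f a + k * f b.

Lemma scalar_linearP (f : {scalar V}) : scalar_linear f.
Proof. by move=> a b k; rewrite linearD linearZ. Qed.

Variables (f : V -> C) (fL : scalar_linear f).

Lemma scalar_linear_for : linear_for *%R f.
Proof. by move=> k a b; rewrite [k *: a + b]addrC fL addrC. Qed.

Definition scalar_of : {scalar V} :=
  HB.pack_for {scalar V} f (GRing.isLinear.Build C V C *%R f scalar_linear_for).

Lemma scalar_ofE a : scalar_of a = f a. Proof. by []. Qed.

Lemma scalar_linear0 : f 0 = 0.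
Proof. by rewrite -scalar_ofE linear0. Qed.

Lemma scalar_linearD a b : f (a + b) = f a + f b.
Proof. by rewrite -!scalar_ofE linearD. Qed.

Lemma scalar_linearZ k a : f (k *: a) = k * f a.
Proof. by rewrite -!scalar_ofE linearZ. Qed.

Lemma scalar_linear_sum (I : Type) (s : seq I) (k : I -> C) (v : I -> V) :
  f (\sum_(i <- s) k i *: v i) = \sum_(i <- s) k i * f (v i).
Proof.
by rewrite -scalar_ofE linear_sum; apply: eq_bigr => i _; rewrite linearZ.
Qed.

End ScalarLinear.

Section Separation.
Variables (C : numClosedFieldType) (U : lmodType C).

Definition separating_scalars :=
  forall u : U, u != 0 -> exists f : {scalar U}, f u != 0.

Lemma separating_eq : separating_scalars ->
  forall u u' : U, (forall f : {scalar U}, f u = f u') -> u = u'.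
Proof.
move=> sepU u u' fuu'; apply/eqP; rewrite -subr_eq0; apply/negPn/negP.
by move=> /sepU[f]; rewrite linearB fuu' subrr eqxx.
Qed.

End Separation.

Section TensorForms.
Variables (C : numClosedFieldType) (V W : lmodType C).
Implicit Types (t : tensor V W) (F : V -> W -> C).

Definition tsum F t := \sum_(p <- t) F p.1 p.2.

Definition bilinear_form F :=
  (forall x, scalar_linear (F x)) /\ (forall y, scalar_linear (F^~ y)).

Lemma teq_refl t : teq t t. Proof. by []. Qed.

Lemma teq_sym t t' : teq t t' -> teq t' t.
Proof. by move=> tt' f g; rewrite tt'. Qed.

Lemma teq_trans t1 t2 t3 : teq t1 t2 -> teq t2 t3 -> teq t1 t3.
Proof. by move=> t12 t23 f g; rewrite t12 t23. Qed.

Lemma tev_bilinear (f : {scalar V}) (g : {scalar W}) :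
  bilinear_form (fun x y => f x * g y).
Proof.
by split=> [x | y] a b k /=; rewrite linearD linearZ /=; ring.
Qed.

Lemma tsum_tlin F t k t' : bilinear_form F ->
  tsum F (tlin t k t') = tsum F t + k * tsum F t'.
Proof.
move=> [_ FLl]; rewrite /tsum big_cat big_map mulr_sumr; congr (_ + _).
by apply: eq_bigr => p _; rewrite (scalar_linearZ (FLl _)).
Qed.

(* Valid for any [c]; when [c x = 1], [c] vanishes on every first leg of the
   new tensor, which is what drives the induction in [tsum_eq0]. *)
Lemma tsum_cons_shift F (c : {scalar V}) x y (r : tensor V W) :
  bilinear_form F ->
  tsum F ((x, y) :: r) =
    F x (y + \sum_(p <- r) c p.1 *: p.2)
    + tsum F [seq (p.1 - c p.1 *: x, p.2) | p <- r].
Proof.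
move=> [FLr FLl]; rewrite /tsum big_cons big_map /= (scalar_linearD (FLr x)).
rewrite (scalar_linear_sum (FLr x)) -addrA; congr (_ + _).
rewrite -big_split; apply: eq_bigr => p _ /=.
by rewrite -scaleN1r (FLl p.2) (scalar_linearZ (FLl p.2)); ring.
Qed.

Hypotheses (sepV : separating_scalars V) (sepW : separating_scalars W).

Lemma tsum_eq0 t : (forall f g, tev f g t = 0) ->
  forall F, bilinear_form F -> tsum F t = 0.
Proof.
have [n] := ubnP (size t); elim: n t => // n IHn [|[x y] r] /= /ltnSE r_lt_n t0 F bF.
  by rewrite /tsum big_nil.
have [x0 | x_neq0] := eqVneq x 0.
  subst x; rewrite /tsum big_cons /= (scalar_linear0 (bF.2 y)) add0r.
  apply: IHn => // f g; have := t0 f g.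
  by rewrite /tev big_cons /= linear0 mul0r add0r.
have [c cx] : exists c : {scalar V}, c x = 1.
  have [f fx_neq0] := sepV x_neq0.
  have cL : scalar_linear (fun u => f u / f x).
    by move=> a b k; rewrite linearD linearZ /= mulrDl mulrA.
  by exists (scalar_of cL); rewrite scalar_ofE divff.
have c_kill u : c (u - c u *: x) = 0.
  by rewrite linearB linearZ /= cx mulr1 subrr.
pose Y := y + \sum_(p <- r) c p.1 *: p.2.
pose r' := [seq (p.1 - c p.1 *: x, p.2) | p <- r].
have tev_shift f' g' : tev f' g' ((x, y) :: r) = f' x * g' Y + tev f' g' r'.
  exact: (tsum_cons_shift c x y r (tev_bilinear f' g')).
have Y0 : Y = 0.
  apply: (separating_eq sepW) => g; rewrite linear0.
  have := t0 c g; rewrite tev_shift cx mul1r /tev big_map big1 ?addr0 // => p _.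
  by rewrite c_kill mul0r.
rewrite (tsum_cons_shift c x y r bF) -/Y Y0 (scalar_linear0 (bF.1 x)) add0r.
apply: IHn; rewrite ?size_map // => f' g'.
by have := t0 f' g'; rewrite tev_shift Y0 linear0 mulr0 add0r.
Qed.

Lemma teq_tsum t t' : teq t t' -> forall F, bilinear_form F -> tsum F t = tsum F t'.
Proof.
move=> tt' F bF; apply/eqP; rewrite -subr_eq0 -mulN1r -tsum_tlin //.
apply/eqP/tsum_eq0 => // f g.
have tt'fg : tsum (fun a b => f a * g b) t = tsum (fun a b => f a * g b) t' := tt' f g.
change (tsum (fun a b => f a * g b) (tlin t (-1) t') = 0).
by rewrite tsum_tlin ?tt'fg; [ring | exact: tev_bilinear].
Qed.

End TensorForms.

Section FaithfulState.
Variables (C : numClosedFieldType) (A : algType C) (st : A -> A) (Phi : A -> C).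
Hypothesis Phi_linear : scalar_linear Phi.
Hypothesis st_antilinear : forall a b (k : C), st (a + k *: b) = st a + k^* *: st b.
Hypothesis Phi_ge0 : forall a, 0 <= Phi (st a * a).
Hypothesis Phi_faithful : forall a, Phi (st a * a) = 0 -> a = 0.

Lemma st0 : st 0 = 0.
Proof.
have := st_antilinear 0 0 1; rewrite scale1r addr0 conjC1 scale1r.
by move/(congr1 (fun z => z - st 0)); rewrite subrr addrK.
Qed.

Lemma st_sum (I : Type) (s : seq I) (k : I -> C) (a : I -> A) :
  st (\sum_(i <- s) k i *: a i) = \sum_(i <- s) (k i)^* *: st (a i).
Proof.
elim: s => [|i s IHs]; first by rewrite !big_nil st0.
by rewrite !big_cons addrC st_antilinear IHs addrC.
Qed.

Lemma Phi_ip_linear x : scalar_linear (fun y => Phi (st x * y)).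
Proof. by move=> a b k; rewrite mulrDr -scalerAr Phi_linear. Qed.

(* Polarization: positivity of [<v + k w, v + k w>] makes
   [k <v, w> + k^* <w, v>] real for every [k]; take [k = 1] and [k = 'i]. *)
Lemma Phi_ip_conj v w : Phi (st w * v) = (Phi (st v * w))^*.
Proof.
set x := Phi (st v * w); set y := Phi (st w * v).
have cross_real k : k * x + k^* * y \is Num.real.
  have -> : k * x + k^* * y = Phi (st (v + k *: w) * (v + k *: w))
      - Phi (st v * v) - `|k| ^+ 2 * Phi (st w * w).
    rewrite st_antilinear mulrDl !mulrDr -!scalerAl -!scalerAr.
    rewrite !(scalar_linearD Phi_linear) !(scalar_linearZ Phi_linear) normCK -/x -/y.
    ring.
  by rewrite !rpredB ?rpredM ?rpredX ?ger0_real ?normr_ge0.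
have := conj_Creal (cross_real 1); rewrite conjC1 !mul1r rmorphD /= => e1.
have := conj_Creal (cross_real 'i); rewrite rmorphD !rmorphM /= conjCK conjCi => ei.
have two_i_neq0 : 2 * 'i != 0 :> C by rewrite mulf_neq0 ?neq0Ci ?pnatr_eq0.
suff /(mulfI two_i_neq0) <- : 2 * 'i * y^* = 2 * 'i * x by rewrite conjCK.
transitivity ('i * (x^* + y^*) + (- 'i * x^* + 'i * y^*)); first by ring.
by rewrite e1 ei; ring.
Qed.

Lemma Phi_ip_separating : separating_scalars A.
Proof.
move=> x x_neq0; exists (scalar_of (Phi_ip_linear x)); rewrite scalar_ofE.
by apply: contra_neq x_neq0; apply: Phi_faithful.
Qed.

End FaithfulState.

Section AlgebraTensors.
Variables (C : numClosedFieldType) (A : algType C).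
Implicit Types (s u : tensor A A) (f : {scalar A}).

Lemma scalar_mull_linear f c : scalar_linear (fun a => f (c * a)).
Proof. by move=> a b k; rewrite mulrDr -scalerAr scalar_linearP. Qed.

Lemma scalar_mulr_linear f c : scalar_linear (fun a => f (a * c)).
Proof. by move=> a b k; rewrite mulrDl -scalerAl scalar_linearP. Qed.

Lemma teq_allpairs_mul s s' u u' : teq s s' -> teq u u' ->
  teq [seq (p.1 * q.1, p.2 * q.2) | p <- s, q <- u]
      [seq (p.1 * q.1, p.2 * q.2) | p <- s', q <- u'].
Proof.
move=> ss' uu' f g; rewrite /tev !big_allpairs_dep /=.
transitivity (\sum_(p <- s) \sum_(q <- u') f (p.1 * q.1) * g (p.2 * q.2)).
  apply: eq_bigr => p _.
  exact: uu' (scalar_of (scalar_mull_linear f p.1))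
             (scalar_of (scalar_mull_linear g p.2)).
rewrite exchange_big [RHS]exchange_big; apply: eq_bigr => q _.
exact: ss' (scalar_of (scalar_mulr_linear f q.1)) (scalar_of (scalar_mulr_linear g q.2)).
Qed.

End AlgebraTensors.

Section L2Representation.
Variables (C : numClosedFieldType) (A : algType C).
Variables (st : A -> A) (Delta : A -> tensor A A) (eps : A -> C)
          (S : A -> A) (Phi : A -> C).

Hypothesis Delta_linear : forall a b (k : C),
  teq (Delta (a + k *: b)) (tlin (Delta a) k (Delta b)).
Hypothesis Delta_mul : forall a b, teq (Delta (a * b))
  [seq (p.1 * q.1, p.2 * q.2) | p <- Delta a, q <- Delta b].
Hypothesis Delta_coassoc : forall a (f g h : {scalar A}),
    \sum_(p <- Delta a) tev f g (Delta p.1) * h p.2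
  = \sum_(p <- Delta a) f p.1 * tev g h (Delta p.2).
Hypothesis eps_linear : scalar_linear eps.
Hypothesis Delta_counit : forall a, \sum_(p <- Delta a) eps p.2 *: p.1 = a.
Hypothesis S_linear : forall a b (k : C), S (a + k *: b) = S a + k *: S b.
Hypothesis Delta_antipode : forall a, \sum_(p <- Delta a) p.1 * S p.2 = eps a *: 1.
Hypothesis st_invol : involutive st.
Hypothesis st_antilinear : forall a b (k : C), st (a + k *: b) = st a + k^* *: st b.
Hypothesis st_mul : forall a b, st (a * b) = st b * st a.
Hypothesis Delta_st : forall a,
  teq (Delta (st a)) [seq (st p.1, st p.2) | p <- Delta a].
Hypothesis Phi_linear : scalar_linear Phi.
Hypothesis Phi_ge0 : forall a, 0 <= Phi (st a * a).
Hypothesis Phi_faithful : forall a, Phi (st a * a) = 0 -> a = 0.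
Hypothesis Phi_invariant : forall a, \sum_(p <- Delta a) Phi p.1 *: p.2 = Phi a *: 1.

Local Notation "⟨ v , w ⟩" := (Phi (st v * w)) (format "⟨ v ,  w ⟩").

Let A_separating : separating_scalars A := Phi_ip_separating Phi_linear Phi_faithful.
Let ip_linear := Phi_ip_linear st Phi_linear.
Let ip_conj := Phi_ip_conj Phi_linear st_antilinear Phi_ge0.

Lemma eq_scalarsA x y : (forall f : {scalar A}, f x = f y) -> x = y.
Proof. exact: (separating_eq A_separating). Qed.

Lemma teq_sum_scale (f : A -> C) (L : A -> A) (t t' : tensor A A) :
  scalar_linear f -> (forall a b (k : C), L (a + k *: b) = L a + k *: L b) ->
  teq t t' -> \sum_(p <- t) f p.1 *: L p.2 = \sum_(p <- t') f p.1 *: L p.2.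
Proof.
move=> fL L_linear tt'; apply: eq_scalarsA => h; rewrite !linear_sum /=.
have hL : scalar_linear (fun a => h (L a)).
  by move=> a b k; rewrite L_linear scalar_linearP.
under eq_bigr do rewrite linearZ /=.
under [RHS]eq_bigr do rewrite linearZ /=.
exact: tt' (scalar_of fL) (scalar_of hL).
Qed.

Lemma Delta_counit_teq v (t : tensor A A) : teq t (Delta v) ->
  \sum_(p <- t) eps p.2 *: p.1 = v.
Proof.
move=> tv; apply: eq_scalarsA => g; rewrite -[in RHS](Delta_counit v) !linear_sum.
under eq_bigr do rewrite linearZ /= mulrC.
under [RHS]eq_bigr do rewrite linearZ /= mulrC.
exact: tv g (scalar_of eps_linear).
Qed.

Lemma Delta_tev_linear (f g : {scalar A}) :
  scalar_linear (fun a => tev f g (Delta a)).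
Proof.
by move=> a b k; rewrite (Delta_linear a b k f g); apply: tsum_tlin (tev_bilinear f g).
Qed.

Lemma Delta_coassoc_teq v (t : tensor A A) (f g h : {scalar A}) : teq t (Delta v) ->
    \sum_(p <- t) tev f g (Delta p.1) * h p.2
  = \sum_(p <- t) f p.1 * tev g h (Delta p.2).
Proof.
move=> tv; have := Delta_coassoc v f g h.
have := tv (scalar_of (Delta_tev_linear f g)) h.
have := tv f (scalar_of (Delta_tev_linear g h)).
by rewrite /tev => -> ->.
Qed.

Lemma Delta_star_mul w a : teq (Delta (st w * a))
  [seq (st p.1 * q.1, st p.2 * q.2) | p <- Delta w, q <- Delta a].
Proof.
have := teq_allpairs_mul (Delta_st w) (teq_refl (Delta a)); rewrite allpairs_mapl.
exact: teq_trans (Delta_mul _ _).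
Qed.

Lemma Delta_coassoc_bilinear v (f : {scalar A}) F : bilinear_form F ->
    \sum_(p <- Delta v) \sum_(a <- Delta p.1) f a.1 * F a.2 p.2
  = \sum_(p <- Delta v) f p.1 * \sum_(a <- Delta p.2) F a.1 a.2.
Proof.
move=> bF.
have coassoc : teq [seq (f a.1 *: a.2, p.2) | p <- Delta v, a <- Delta p.1]
                   [seq (f p.1 *: a.1, a.2) | p <- Delta v, a <- Delta p.2].
  move=> g h; rewrite /tev !big_allpairs_dep /=.
  transitivity (\sum_(p <- Delta v) tev f g (Delta p.1) * h p.2).
    apply: eq_bigr => p _; rewrite /tev mulr_suml.
    by apply: eq_bigr => a _; rewrite linearZ.
  rewrite Delta_coassoc; apply: eq_bigr => p _; rewrite /tev mulr_sumr.
  by apply: eq_bigr => a _; rewrite linearZ /= mulrA.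
have := teq_tsum A_separating A_separating coassoc bF.
rewrite /tsum !big_allpairs_dep /= => coassocF.
transitivity (\sum_(p <- Delta v) \sum_(a <- Delta p.1) F (f a.1 *: a.2) p.2).
  by apply: eq_bigr => p _; apply: eq_bigr => a _; rewrite (scalar_linearZ (bF.2 _)).
rewrite coassocF; apply: eq_bigr => p _; rewrite mulr_sumr.
by apply: eq_bigr => a _; rewrite (scalar_linearZ (bF.2 _)).
Qed.

Lemma Delta_antipode_cancel v (f g : {scalar A}) c :
  \sum_(p <- Delta v) \sum_(a <- Delta p.1) f a.1 * g (c * a.2 * S p.2) = f v * g c.
Proof.
have bF : bilinear_form (fun y z => g (c * y * S z)).
  split=> [y | z] a b k; first by rewrite S_linear mulrDr -scalerAr scalar_linearP.
  by rewrite mulrDr -scalerAr mulrDl -scalerAl scalar_linearP.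
rewrite (Delta_coassoc_bilinear v f bF).
transitivity (\sum_(p <- Delta v) f p.1 * (eps p.2 * g c)).
  apply: eq_bigr => p _; congr (_ * _).
  under eq_bigr do rewrite -mulrA.
  by rewrite -linear_sum -mulr_sumr Delta_antipode -scalerAr mulr1 linearZ.
rewrite -[in RHS](Delta_counit v) linear_sum mulr_suml.
by apply: eq_bigr => p _; rewrite linearZ /=; ring.
Qed.

Lemma Phi_ip_antipode v w :
  \sum_(p <- Delta v) ⟨w, p.1⟩ *: S p.2 = \sum_(b <- Delta w) ⟨b.1, v⟩ *: st b.2.
Proof.
apply: eq_scalarsA => k; rewrite !linear_sum /=.
under eq_bigr do rewrite linearZ /=.
under [RHS]eq_bigr do rewrite linearZ /=.
transitivity (\sum_(p <- Delta v) \sum_(r <- Delta (st w * p.1))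
                Phi r.1 * k (r.2 * S p.2)).
  apply: eq_bigr => p _.
  have := congr1 (fun a => k (a * S p.2)) (Phi_invariant (st w * p.1)).
  rewrite /= mulr_suml linear_sum -scalerAl mul1r linearZ /= => <-.
  by apply: eq_bigr => r _; rewrite -scalerAl linearZ.
transitivity (\sum_(p <- Delta v) \sum_(b <- Delta w) \sum_(a <- Delta p.1)
                Phi (st b.1 * a.1) * k (st b.2 * a.2 * S p.2)).
  apply: eq_bigr => p _.
  have := Delta_star_mul w p.1 (scalar_of Phi_linear)
                               (scalar_of (scalar_mulr_linear k (S p.2))).
  by rewrite /tev big_allpairs_dep.
rewrite exchange_big; apply: eq_bigr => b _.
exact: (Delta_antipode_cancel v (scalar_of (ip_linear b.1)) k (st b.2)).
Qed.

Lemma Phi_ip_coact v w (tv tw : tensor A A) : teq tv (Delta v) -> teq tw (Delta w) ->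
  \sum_(p <- tw) ⟨v, p.1⟩ *: p.2 = \sum_(p <- tv) ⟨p.1, w⟩ *: dagger st S p.2.
Proof.
move=> tvv tww.
rewrite (teq_sum_scale (L := id) (ip_linear v) _ tww) //.
have -> : \sum_(p <- tv) ⟨p.1, w⟩ *: dagger st S p.2
        = st (\sum_(p <- tv) ⟨w, p.1⟩ *: S p.2).
  by rewrite (st_sum st_antilinear); apply: eq_bigr => p _; rewrite /= ip_conj.
rewrite (teq_sum_scale (ip_linear w) S_linear tvv) Phi_ip_antipode.
rewrite (st_sum st_antilinear); apply: eq_bigr => b _.
by rewrite /= st_invol ip_conj.
Qed.

Variable B : {pred A}.
Hypothesis B_has1 : 1 \in B.
Hypothesis B_lin_closed : forall b c (k : C), b \in B -> c \in B -> b + k *: c \in B.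
Hypothesis B_mul_closed : forall b c, b \in B -> c \in B -> b * c \in B.
Hypothesis B_coideal : forall b, b \in B -> exists t, teq (Delta b) t /\ tin_left B t.

Lemma L2_in_BRep :
  in_BRep st Delta eps S B (W := A) B (fun b v => b * v) Delta (fun b b' => ⟨b, b'⟩).
Proof.
rewrite /in_BRep /=; split.
- split; last exact: B_lin_closed.
  by have := B_lin_closed (-1) B_has1 B_has1; rewrite scaleN1r subrr.
- split=> [b v | b v w k _ _ _ | b c v k _ _ _ | v _ | b c v _ _ _].
  + exact: B_mul_closed.
  + by rewrite mulrDr scalerAr.
  + by rewrite mulrDl scalerAl.
  + exact: mul1r.
  + by rewrite mulrA.
- split.
  + by move=> v /B_coideal[t [vt tB]]; exists t; split=> //; apply: teq_sym.
  + by move=> v w k _ _; apply: Delta_linear.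
  + by move=> v t f g h _ [tv _]; apply: Delta_coassoc_teq tv.
  + by move=> v t _ [tv _]; apply: Delta_counit_teq.
- move=> b v tb tv _ _ tbb _ [tvv _].
  exact: teq_trans (Delta_mul b v) (teq_allpairs_mul (teq_sym tbb) (teq_sym tvv)).
- split.
  + split=> [u v w k _ _ _ | v w _ _ | v _ v_neq0]; [exact: ip_linear | exact: ip_conj |].
    by rewrite lt_def Phi_ge0 andbT; apply: contra_neq v_neq0; apply: Phi_faithful.
  + by move=> b v w _ _ _; rewrite st_mul st_invol mulrA.
  + by move=> v w tv tw _ _ [tvv _] [tww _]; apply: Phi_ip_coact.
Qed.

End L2Representation.

Theorem mainTheorem9 (C : numClosedFieldType) (A : algType C)
  (st : A -> A) (Delta : A -> tensor A A) (eps : A -> C) (S : A -> A)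
  (Phi : A -> C) (B : {pred A}) :
  is_CQG_Hopf_star st Delta eps S Phi ->
  is_right_coideal_star_subalg st Delta B ->
  in_BRep st Delta eps S B (W := A) B (fun b v => b * v) Delta
    (fun b b' => Phi (st b * b')).
Proof.
move=> [[[Delta_linear _ Delta_mul] Delta_coassoc [eps_linear _ _ _ Delta_counit]
         [S_linear _ Delta_antipode]] [st_invol st_antilinear st_mul Delta_st]
        [Phi_linear _ Phi_ge0] Phi_faithful [Phi_invariant _]].
move=> [B_has1 B_lin_closed B_mul_closed _ B_coideal].
exact: L2_in_BRep.
Qed.
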